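(* Let $(C,S)$ be a partially shaded tree, where $C$ is the support tree of a vertex of a non-degenerate transportation polytope $\mathrm{TP}(u,v)$. If some well-connected component of $(C,S)$ contains no open node, then $(C,S)$ is fully shaded.
   Context: Let $N_1,N_2\ge1$, $u\in\mathbb{R}_{>0}^{N_1}$, $v\in\mathbb{R}_{>0}^{N_2}$ with $\sum_iu_i=\sum_jv_j$, and $\mathrm{TP}(u,v)=\{y\in\mathbb{R}^{N_1\times N_2}: \sum_j y_{ij}=u_i\ \forall i,\ \sum_i y_{ij}=v_j\ \forall j,\ y\ge 0\}$. View supply nodes $\sigma^1,\dots,\sigma^{N_1}$ and demand nodes $\delta^1,\dots,\delta^{N_2}$ as the two sides of the complete bipartite graph $K_{N_1,N_2}$; the support graph of $y$ consists of the edges $\{\sigma^i,\delta^j\}$ with $y_{ij}>0$. $\mathrm{TP}(u,v)$ is non-degenerate if there are no nonempty proper subsets $I\subsetneq\{1,\dots,N_1\}$, $J\subsetneq\{1,\dots,N_2\}$ with $\sum_{i\in I}u_i=\sum_{j\in J}v_j$; then the support graph of each vertex is a spanning tree of $K_{N_1,N_2}$, which determines the vertex; these are called trees. Fix a tree $F$ (the final tree). A partially shaded tree is a pair $(C,S)$ where $C$ is a tree and $S\subseteq C\cap F$ is the set of shaded edges (other edges of $C$ are unshaded); it is fully shaded if $S=C$. A supply node $\sigma$ is well-connected in $(C,S)$ if every edge of $F$ incident to $\sigma$ lies in $S$; otherwise it is open. A demand node is well-connected if it is not incident to an unshaded edge of $C$; otherwise it is open. A well-connected edge is a shaded edge incident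 to at least one well-connected node. The well-connected components are the connected components of the graph on all $N_1+N_2$ nodes whose edges are the well-connected edges (in particular a node incident to no well-connected edge forms a component by itself). *)

From HB Require Import structures.
From mathcomp Require Import all_boot all_order all_algebra.
Set Implicit Arguments. Unset Strict Implicit. Unset Printing Implicit Defensive.
Import Order.TTheory GRing.Theory Num.Theory.
Local Open Scope ring_scope.

Section TP.
Variables (R : realFieldType) (N1 N2 : nat).
Variables (u : 'I_N1 -> R) (v : 'I_N2 -> R).

Definition in_TP (y : 'M[R]_(N1, N2)) : Prop :=
  (forall i, \sum_(j < N2) y i j = u i) /\
  (forall j, \sum_(i < N1) y i j = v j) /\
  (forall i j, 0 <= y i j).

Definition is_vertex (y : 'M[R]_(N1, N2)) : Prop :=
  in_TP y /\
  forall (y1 y2 : 'M[R]_(N1, N2)) (t : R),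
    in_TP y1 -> in_TP y2 -> 0 < t < 1 ->
    y = t *: y1 + (1 - t) *: y2 -> y1 = y2.

Definition non_degenerate : Prop :=
  forall (I : {set 'I_N1}) (J : {set 'I_N2}),
    I != set0 -> I != [set: 'I_N1] -> J != set0 -> J != [set: 'I_N2] ->
    \sum_(i in I) u i <> \sum_(j in J) v j.

(* edges {sigma^i, delta^j} of K_{N1,N2} are pairs (i,j) *)
Definition support (y : 'M[R]_(N1, N2)) : {set 'I_N1 * 'I_N2} :=
  [set e | 0 < y e.1 e.2].

(* a tree: the support graph of a vertex of TP(u,v) *)
Definition is_tree (T : {set 'I_N1 * 'I_N2}) : Prop :=
  exists y, is_vertex y /\ T = support y.
End TP.

Section Shaded.
Variables (N1 N2 : nat).
Variables (F C S : {set 'I_N1 * 'I_N2}).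

(* nodes: inl i = supply node sigma^i, inr j = demand node delta^j *)
Definition node := ('I_N1 + 'I_N2)%type.

Definition supply_wc (i : 'I_N1) : bool :=
  [forall j, ((i, j) \in F) ==> ((i, j) \in S)].

Definition demand_wc (j : 'I_N2) : bool :=
  [forall i, ~~ (((i, j) \in C) && ((i, j) \notin S))].

Definition node_wc (x : node) : bool :=
  match x with inl i => supply_wc i | inr j => demand_wc j end.

Definition node_open (x : node) : bool := ~~ node_wc x.

Definition wc_edge (e : 'I_N1 * 'I_N2) : bool :=
  (e \in S) && (supply_wc e.1 || demand_wc e.2).

Definition wc_adj : rel node := fun a b =>
  match a, b with
  | inl i, inr j => wc_edge (i, j)
  | inr j, inl i => wc_edge (i, j)
  | _, _ => false
  end.

Definition wc_component (x : node) : pred node := fun z => connect wc_adj x z.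
End Shaded.

From HB Require Import structures.
From mathcomp Require Import all_boot all_order all_algebra.
Set Implicit Arguments. Unset Strict Implicit. Unset Printing Implicit Defensive.
Import Order.TTheory GRing.Theory Num.Theory.
Local Open Scope ring_scope.

(* Let I and J be the supply and demand nodes of a well-connected component
   without open nodes, and let yF, yC be the vertices with supports F and C.
   Each node of I is well-connected, so all its F-edges are shaded, hence
   well-connected: yF ships all the supply of I into J, and
   sum_I u <= sum_J v.  Each node of J is well-connected, so all its C-edges
   are shaded, hence well-connected: yC receives all the demand of J from I,
   and sum_J v <= sum_I u.  Non-degeneracy then forces I and J to be
   everything, so every demand node is well-connected and no edge of C is
   unshaded. *)

Section PositiveSums.
Variables (R : numDomainType) (T : finType) (f : T -> R).
Hypothesis f_gt0 : forall i, 0 < f i.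

Lemma psumr_eq0_set0 (A : {set T}) : \sum_(i in A) f i = 0 -> A = set0.
Proof.
move=> sum0; apply/setP => i; rewrite inE; apply/negbTE/negP => iA.
have := f_gt0 i; rewrite (psumr_eq0P _ sum0) ?ltxx // => j _.
exact: ltW.
Qed.

Lemma psumr_eq_total_setT (A : {set T}) :
  \sum_(i in A) f i = \sum_i f i -> A = setT.
Proof.
rewrite [RHS](bigID (mem A)) /= -[LHS]addr0 => /addrI /esym sumC0.
rewrite -[A]setCK (@psumr_eq0_set0 (~: A)) ?setC0 //.
by rewrite -[RHS]sumC0; apply: eq_bigl => i; rewrite inE.
Qed.

End PositiveSums.

Section Transportation.
Variables (R : realFieldType) (N1 N2 : nat).
Variables (u : 'I_N1 -> R) (v : 'I_N2 -> R).

Lemma in_TP_trmx (y : 'M[R]_(N1, N2)) : in_TP u v y -> in_TP v u y^T.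
Proof.
move=> [rows [cols y_ge0]].
split; [|split] => [j|i|j i]; rewrite ?mxE //.
  by rewrite -cols; apply: eq_bigr => i _; rewrite mxE.
by rewrite -rows; apply: eq_bigr => j _; rewrite mxE.
Qed.

Lemma in_TP_sum_le (y : 'M[R]_(N1, N2)) (I : {set 'I_N1}) (J : {set 'I_N2}) :
  in_TP u v y -> (forall i j, i \in I -> 0 < y i j -> j \in J) ->
  \sum_(i in I) u i <= \sum_(j in J) v j.
Proof.
move=> [rows [cols y_ge0]] IJ.
have -> : \sum_(i in I) u i = \sum_(i in I) \sum_(j in J) y i j.
  apply: eq_bigr => i iI; rewrite -rows (bigID (mem J)) /=.
  rewrite [X in _ + X]big1 ?addr0 // => j jNJ.
  apply/eqP; rewrite eq_le y_ge0 andbT leNgt; apply: contra jNJ.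
  exact: IJ.
rewrite exchange_big /=; apply: ler_sum => j _; rewrite -cols.
rewrite [X in _ <= X](bigID (mem I)) /= lerDl.
by apply: sumr_ge0 => i _.
Qed.

Lemma non_degenerate_balanced_setT (I : {set 'I_N1}) (J : {set 'I_N2}) :
  (forall i, 0 < u i) -> (forall j, 0 < v j) ->
  \sum_i u i = \sum_j v j -> non_degenerate u v ->
  \sum_(i in I) u i = \sum_(j in J) v j ->
  (I != set0) || (J != set0) -> I = setT /\ J = setT.
Proof.
move=> u_gt0 v_gt0 total nd balanced IJ0.
have I0 : I != set0.
  apply: contraTneq IJ0 => I0; move: balanced; rewrite I0 big_set0.
  by move/esym/(psumr_eq0_set0 v_gt0) ->; rewrite !eqxx.
have J0 : J != set0.
  apply: contraNneq I0 => J0; move: balanced; rewrite J0 big_set0.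
  by move/(psumr_eq0_set0 u_gt0) ->.
have [IT|IT] := eqVneq I setT.
  split=> //; apply: (psumr_eq_total_setT v_gt0).
  by rewrite -balanced -total IT; apply: eq_bigl => i; rewrite inE.
have [JT|JT] := eqVneq J setT; last by have := nd I J I0 IT J0 JT.
split=> //; apply: (psumr_eq_total_setT u_gt0).
by rewrite balanced total JT; apply: eq_bigl => j; rewrite inE.
Qed.

End Transportation.

Section WellConnectedComponent.
Variables (N1 N2 : nat) (F C S : {set 'I_N1 * 'I_N2}).

Local Notation adj := (wc_adj F C S).

Lemma supply_wc_adj i j :
  supply_wc F S i -> (i, j) \in F -> adj (inl i) (inr j).
Proof. by move=> iwc ijF; rewrite /= /wc_edge iwc (implyP (forallP iwc j)). Qed.

Lemma demand_wc_shaded i j : demand_wc C S j -> (i, j) \in C -> (i, j) \in S.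
Proof. by move=> /forallP/(_ i); rewrite negb_and negbK => /orP[/negP|]. Qed.

Lemma demand_wc_adj i j :
  demand_wc C S j -> (i, j) \in C -> adj (inr j) (inl i).
Proof.
by move=> jwc ijC; rewrite /= /wc_edge jwc orbT (demand_wc_shaded jwc ijC).
Qed.

Lemma all_demand_wc_shaded :
  (forall j, demand_wc C S j) -> S \subset C -> S = C.
Proof.
move=> dwc SC; apply/eqP; rewrite eqEsubset SC.
by apply/subsetP => -[i j]; apply: demand_wc_shaded.
Qed.

Variable x : node N1 N2.
Hypothesis component_wc : forall z, connect adj x z -> node_wc F C S z.

Definition component_supply := [set i | connect adj x (inl i)].
Definition component_demand := [set j | connect adj x (inr j)].

Lemma component_supply_closed i j :
  i \in component_supply -> (i, j) \in F -> j \in component_demand.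
Proof.
rewrite !inE => xi ijF.
exact: connect_trans xi (connect1 (supply_wc_adj (component_wc xi) ijF)).
Qed.

Lemma component_demand_closed i j :
  j \in component_demand -> (i, j) \in C -> i \in component_supply.
Proof.
rewrite !inE => xj ijC.
exact: connect_trans xj (connect1 (demand_wc_adj (component_wc xj) ijC)).
Qed.

Lemma component_nonempty :
  (component_supply != set0) || (component_demand != set0).
Proof.
rewrite /component_supply /component_demand.
case: x => [i|j]; apply/orP; [left|right]; apply/set0Pn.
  by exists i; rewrite inE connect0.
by exists j; rewrite inE connect0.
Qed.

End WellConnectedComponent.

Theorem lemma2 (R : realFieldType) (N1 N2 : nat)
  (u : 'I_N1 -> R) (v : 'I_N2 -> R) (F C S : {set 'I_N1 * 'I_N2}) :
  (0 < N1)%N -> (0 < N2)%N ->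
  (forall i, 0 < u i) -> (forall j, 0 < v j) ->
  \sum_(i < N1) u i = \sum_(j < N2) v j ->
  non_degenerate u v ->
  is_tree u v F -> is_tree u v C ->
  S \subset C :&: F ->
  (exists x : node N1 N2,
     forall z, z \in wc_component F C S x -> ~~ node_open F C S z) ->
  S = C.
Proof.
move=> _ _ u_gt0 v_gt0 total nd [yF [[yF_TP _] eF]] [yC [[yC_TP _] eC]] SCF.
move=> [x no_open].
have component_wc z : connect (wc_adj F C S) x z -> node_wc F C S z.
  by move/no_open; rewrite negbK.
pose I := component_supply F C S x; pose J := component_demand F C S x.
have le_IJ : \sum_(i in I) u i <= \sum_(j in J) v j.
  apply: in_TP_sum_le yF_TP _ => i j iI yij.
  have ijF : (i, j) \in F by rewrite eF inE.
  exact: (component_supply_closed component_wc iI ijF).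
have le_JI : \sum_(j in J) v j <= \sum_(i in I) u i.
  apply: in_TP_sum_le (in_TP_trmx yC_TP) _ => j i jJ; rewrite mxE => yij.
  have ijC : (i, j) \in C by rewrite eC inE.
  exact: (component_demand_closed component_wc jJ ijC).
have balanced : \sum_(i in I) u i = \sum_(j in J) v j.
  by apply/le_anti/andP.
have [_ JT] := non_degenerate_balanced_setT u_gt0 v_gt0 total nd balanced
  (component_nonempty F C S x).
apply: all_demand_wc_shaded (subset_trans SCF (subsetIl _ _)) => j.
have : j \in J by rewrite JT inE.
by rewrite inE => /(component_wc (inr j)).
Qed.
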